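(* Let $n\ge2$ and let $X_1,\ldots,X_n$ be independent and identically distributed random vectors in $\mathbb{R}^n$ such that $X_1,\ldots,X_{n-1}$ are linearly independent almost surely. Let $$Y=\frac{\wedge(X_1,\ldots,X_{n-1})}{\|\wedge(X_1,\ldots,X_{n-1})\|_\infty}.$$ Then $Y\in\mathcal{C}_{n-1}(Y)$ almost surely.
   Context: The generalized cross product $\wedge:(\mathbb{R}^n)^{n-1}\to\mathbb{R}^n$ is the formal determinant of the $n\times n$ matrix whose first row is $(\mathbf e_1,\ldots,\mathbf e_n)$ (canonical basis vectors) and whose $(j+1)$-th row is $(x_j(1),\ldots,x_j(n))$; it vanishes iff $x_1,\ldots,x_{n-1}$ are linearly dependent. $\|v\|_\infty=\max_i|v(i)|$. For a random vector $Z$ in $\mathbb{R}^n$ and an integer $m\ge0$, the $m$-dimensional mould $\mathcal{C}_m(Z)$ is the set of all $z\in\mathbb{R}^n$ such that $\liminf_{\epsilon\to0^+}\mathbb{P}(\|Z-z\|_2<\epsilon)/\epsilon^m>0$. *)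

From HB Require Import structures.
From mathcomp Require Import all_boot all_order all_algebra.
From mathcomp Require Import all_classical all_reals all_analysis.
Set Implicit Arguments. Unset Strict Implicit. Unset Printing Implicit Defensive.
Import Order.TTheory GRing.Theory Num.Def Num.Theory.
Import numFieldNormedType.Exports.
Local Open Scope classical_set_scope.
Local Open Scope ring_scope.

Section Defs.
Variable R : realType.

(* Generalized cross product of m vectors (the rows of M) in R^(m+1):
   the formal determinant of the (m+1)x(m+1) matrix whose first row is
   (e_1, ..., e_(m+1)) and whose (j+1)-th row is the j-th row of M. *)
Definition gcross (m : nat) (M : 'M[R]_(m, m.+1)) : 'rV[R]_(m.+1) :=
  \row_(k < m.+1) \det (\matrix_(i < m.+1, j < m.+1)
      match unlift ord0 i with
      | None => (j == k)%:R
      | Some i' => M i' j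
      end).

Definition norm_inf (n : nat) (v : 'rV[R]_n) : R :=
  \big[Num.max/0]_(k < n) `|v ord0 k|.
Definition norm_2 (n : nat) (v : 'rV[R]_n) : R :=
  Num.sqrt (\sum_(k < n) v ord0 k ^+ 2).

Definition borel_Rn (n : nat) : set (set 'rV[R]_n) :=
  <<s [set (fun v : 'rV[R]_n => v ord0 j) @^-1` B
       | j in [set: 'I_n] & B in [set B : set R | measurable B]] >>.

Context {d : measure_display} {T : measurableType d}.

Definition random_vector (n : nat) (X : T -> 'rV[R]_n) : Prop :=
  forall B, borel_Rn B -> measurable (X @^-1` B).

Variable P : probability T R.

Definition independent_rv (I : finType) (n : nat) (X : I -> T -> 'rV[R]_n)
  : Prop :=
  forall B : I -> set 'rV[R]_n, (forall i, borel_Rn (B i)) ->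
    P (\bigcap_(i in [set: I]) (X i @^-1` B i)) =
    (\prod_(i : I) P (X i @^-1` B i))%E.

Definition identically_distributed (I : finType) (n : nat)
  (X : I -> T -> 'rV[R]_n) : Prop :=
  forall i j B, borel_Rn B -> P (X i @^-1` B) = P (X j @^-1` B).

Definition mould (n m : nat) (Z : T -> 'rV[R]_n) : set 'rV[R]_n :=
  [set z | (0 < limf_einf
      (fun eps : R => P [set w | (norm_2 (Z w - z) < eps)%R] * ((eps ^+ m)^-1)%:E)
      (0 : R)^'+)%E].

End Defs.

From HB Require Import structures.
From mathcomp Require Import all_boot all_order all_algebra.
From mathcomp Require Import all_classical all_reals all_analysis.
From mathcomp Require Import measurable_realfun ring lra.
Import Order.TTheory GRing.Theory Num.Def Num.Theory.
Local Open Scope classical_set_scope.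
Local Open Scope ring_scope.

(* Y lies on the boundary of the cube [-1, 1]^n (or at 0 when the
   X_i are dependent), an (n-1)-dimensional set.  Partition the sample
   space by the face of the cube containing Y and, at level j, by the first j
   binary digits of the n-1 free coordinates of Y: a cell of level j splits into
   2^(n-1) cells of level j+1 and lies in a ball of radius O(2^-j) around each of
   its points.  A Kraft-type counting shows that the event "some cell containing
   w has mass below t 2^(-(n-1)j)" has probability O(t), so almost surely the
   balls around Y(w) of radius O(2^-j) have mass at least c 2^(-(n-1)j). *)

Section measurable_fibers.
Context {d : measure_display} {T : measurableType d}.

Definition measurable_fibers {K : finType} (f : T -> K) :=
  forall k, measurable (f @^-1` [set k]).

Lemma measurable_fibers_preimage {K : finType} {f : T -> K} (A : set K) :
  measurable_fibers f -> measurable (f @^-1` A).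
Proof.
move=> mf; rewrite (_ : f @^-1` A = \bigcup_(k in A) f @^-1` [set k]).
  by apply: fin_bigcup_measurable => //; exact: finite_finset.
by apply/seteqP; split => [x Ax|x [k Ak /= ->]] //; exists (f x).
Qed.

Lemma measurable_fibers_comp {K L : finType} {f : T -> K} (h : K -> L) :
  measurable_fibers f -> measurable_fibers (h \o f).
Proof. by move=> mf l; rewrite comp_preimage; exact: measurable_fibers_preimage. Qed.

Lemma measurable_fibers_pair {K L : finType} {f : T -> K} {g : T -> L} :
  measurable_fibers f -> measurable_fibers g ->
  measurable_fibers (fun w => (f w, g w)).
Proof.
move=> mf mg [a b].
rewrite (_ : _ @^-1` _ = f @^-1` [set a] `&` g @^-1` [set b]).
  exact: measurableI.
by apply/seteqP; split => [x /= [-> ->]|x /= [-> ->]].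
Qed.

Lemma measurable_fibers_ffun {I K : finType} (f : I -> T -> K) :
  (forall i, measurable_fibers (f i)) ->
  measurable_fibers (fun w => [ffun i => f i w]).
Proof.
move=> mf phi.
rewrite (_ : _ @^-1` _ = \bigcap_(i in [set: I]) f i @^-1` [set phi i]).
  by apply: fin_bigcap_measurable => [|i _]; [exact: finite_finset|exact: mf].
apply/seteqP; split => [x /= <- i _ /=|x /= fx]; first by rewrite ffunE.
by apply/ffunP => i; rewrite ffunE; exact: fx.
Qed.

Lemma measurable_fun_fibers (f : T -> bool) :
  measurable_fun setT f -> measurable_fibers f.
Proof. by move=> mf b; rewrite -(setTI (_ @^-1` _)); exact: mf. Qed.

End measurable_fibers.

Lemma measure_le_card_fibers {d : measure_display} {T : measurableType d}
    {R : realType} (mu : {measure set T -> \bar R}) {K : finType} {f : T -> K}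
    {A : set T} {b : \bar R} :
  measurable_fibers f -> measurable A ->
  (forall k, mu (A `&` f @^-1` [set k]) <= b)%E -> (mu A <= b *+ #|K|)%E.
Proof.
move=> mf mA hb.
pose B (i : 'I_#|K|) := A `&` f @^-1` [set enum_val i].
have mB i : measurable (B i) by apply: measurableI => //; exact: mf.
have AB : A `<=` \big[setU/set0]_(i < #|K|) B i.
  move=> x Ax; rewrite (bigD1 (enum_rank (f x))) //=; left.
  by rewrite /B /= enum_rankK.
apply: (le_trans (le_measure _ _ _ AB)); rewrite ?inE //.
  by apply: bigsetU_measurable => i _; exact: mB.
rewrite measure_bigsetU_ord //; last first.
  move=> i j _ _ [x [[_ /= ei] [_ /= ej]]]; apply: enum_val_inj.
  by rewrite -ei -ej.
apply: le_trans; first by apply: lee_sum => i _; exact: (hb (enum_val i)).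
by rewrite sumr_const card_ord.
Qed.

Section refining_partition.
Context {d : measure_display} {T : measurableType d} {R : realType}.
Variable P : probability T R.
Context {G F : finType} (root : T -> G) (digit : nat -> T -> F).
Hypothesis mroot : measurable_fibers root.
Hypothesis mdigit : forall j, measurable_fibers (digit j).

Definition cell j w :=
  [set w' | root w' = root w /\ forall i, (i < j)%N -> digit i w' = digit i w].

Lemma cell0 w : cell 0 w = root @^-1` [set root w].
Proof. by apply/seteqP; split => [x []|x /= rx]. Qed.

Lemma cellS j w : cell j.+1 w = cell j w `&` digit j @^-1` [set digit j w].
Proof.
apply/seteqP; split => [x [rx dx]|x [[rx dx] /= dj]].
  by split; [split=> // i ij; apply: dx; exact: ltnW | exact: dx].
by split => // i; rewrite ltnS leq_eqVlt => /orP[/eqP->|/dx].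
Qed.

Lemma measurable_cell j w : measurable (cell j w).
Proof.
elim: j => [|j ih]; first by rewrite cell0; exact: mroot.
by rewrite cellS; apply: measurableI => //; exact: mdigit.
Qed.

Lemma eq_cell {j w w'} : cell j w w' -> cell j w' = cell j w.
Proof.
move=> [rw dw]; apply/seteqP; split => x [rx dx]; split => [|i ij];
  by [rewrite rx rw | rewrite dx // dw].
Qed.

Definition cell_label j w := (root w, [ffun i : 'I_j => digit i w]).

Lemma cell_labelE j w : cell j w = cell_label j @^-1` [set cell_label j w].
Proof.
apply/seteqP; split => [x [rx dx]|x /= [rx /ffunP dx]].
  by rewrite /= /cell_label rx; congr pair; apply/ffunP => i; rewrite !ffunE dx.
by split => // i ij; have := dx (Ordinal ij); rewrite !ffunE.
Qed.

Lemma measurable_fibers_cell_label j : measurable_fibers (cell_label j).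
Proof.
apply: measurable_fibers_pair => //.
exact: (measurable_fibers_ffun (fun (i : 'I_j) => digit i)).
Qed.

Definition weight j : R := (#|F|%:R^-1) ^+ j.

Lemma weight_ge0 j : 0 <= weight j.
Proof. by rewrite exprn_ge0 // invr_ge0. Qed.

Lemma weightS j : weight j.+1 *+ #|F| = weight j.
Proof.
have F_gt0 : (0 < #|F|)%N by apply/card_gt0P; exists (digit 0 point).
by rewrite /weight exprS -mulrnAl -mulr_natr mulVf ?mul1r // pnatr_eq0 -lt0n.
Qed.

Definition light (t : R) j := [set w | (P (cell j w) < (t * weight j)%:E)%E].

Lemma measurable_light t j : measurable (light t j).
Proof.
rewrite (_ : light t j = cell_label j @^-1` (cell_label j @` light t j)).
  exact/measurable_fibers_preimage/measurable_fibers_cell_label.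
apply/seteqP; split => [x lx|x [w lw kw]]; first by exists x.
by rewrite /light /= cell_labelE -kw -cell_labelE.
Qed.

Definition light_within (t : R) j L :=
  \bigcup_(i in [set i | (j <= i < j + L)%N]) light t i.

Lemma measurable_light_within t j L : measurable (light_within t j L).
Proof. by apply: bigcup_measurable => i _; exact: measurable_light. Qed.

Local Hint Resolve measurable_cell measurable_light_within : core.
Local Hint Extern 0 (measurable (_ `&` _)) => (apply: measurableI; trivial) : core.

Lemma heavy_cell_not_light {t : R} {j w w'} : ((t * weight j)%:E <= P (cell j w))%E ->
  cell j w w' -> ~ light t j w'.
Proof. by move=> heavy /eq_cell cw; rewrite /light /= cw ltNge heavy. Qed.

(* A light cell obeys the bound by definition; a heavy one contains no light
   point of level [j], and its [#|F|] children have weights summing to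
   [weight j] (lemma [weightS]), so induction on [L] applies to each child. *)
Lemma measure_light_within_le (t : R) L j w : 0 <= t ->
  (P (cell j w `&` light_within t j L) <= (t * weight j)%:E)%E.
Proof.
move=> t0; elim: L j w => [|L IH] j w.
  rewrite (_ : light_within t j 0 = set0) ?setI0 ?measure0 ?lee_fin //.
    exact: mulr_ge0 (weight_ge0 j).
  by apply/seteqP; split => // x [i /= /andP[ji]]; rewrite addn0 ltnNge ji.
have [lw|heavy] := ltP (P (cell j w)) (t * weight j)%:E.
  by apply: le_trans (ltW lw); exact: measureIl.
have sub : cell j w `&` light_within t j L.+1 `<=` cell j w `&` light_within t j.+1 L.
  move=> x [cx [i /= /andP[ji iL] li]]; split => //; exists i => //=.
  rewrite addSnnS iL andbT ltn_neqAle ji andbT.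
  by apply/eqP => ij; apply: heavy_cell_not_light heavy cx _; rewrite ij.
apply: le_trans (le_measure _ _ _ sub) _; rewrite ?inE //.
rewrite -weightS mulrnAr EFin_natmul.
apply: (measure_le_card_fibers _ (mdigit j)) => // k.
have [[w1 c1 e1]|none] := pselect (exists2 w1, cell j w w1 & digit j w1 = k).
  apply: le_trans (IH j.+1 w1); apply: le_measure; rewrite ?inE //.
    by apply: measurableI => //; exact: mdigit.
  move=> x [[cx lx] /= ex]; split => //; rewrite cellS; split.
    by rewrite (eq_cell c1).
  by rewrite /= ex e1.
rewrite (_ : _ `&` _ = set0) ?measure0 ?lee_fin ?mulr_ge0 ?weight_ge0 //.
by apply/seteqP; split => // x [[cx _] /= ex]; apply: none; exists x.
Qed.

Lemma measure_light_le (t : R) : 0 <= t ->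
  (P (\bigcup_j light t j) <= (t *+ #|G|)%:E)%E.
Proof.
move=> t0.
have -> : \bigcup_j light t j = \bigcup_L light_within t 0 L.
  apply/seteqP; split => [x [i _ li]|x [L _ [i _ li]]]; last by exists i.
  by exists i.+1; [|exists i; rewrite //= add0n].
have incr : {homo light_within t 0 : L L' / (L <= L')%N >-> (L <= L')%O}.
  move=> L L' LL'; apply/subsetPset => x [i /= iL li]; exists i => //=.
  by rewrite !add0n in iL *; exact: leq_trans iL LL'.
have mU : measurable (\bigcup_L light_within t 0 L).
  by apply: bigcupT_measurable => L; exact: measurable_light_within.
have cvgP := nondecreasing_cvg_mu (mu := P) (measurable_light_within t 0) mU incr.
rewrite -(cvg_lim _ cvgP) //; apply: lime_le.
  by apply/cvg_ex; exists (P (\bigcup_L light_within t 0 L)).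
apply: nearW => L; rewrite EFin_natmul.
apply: (measure_le_card_fibers _ mroot) => // g.
have [[w1 e1]|none] := pselect (exists w1, root w1 = g).
  have := measure_light_within_le t L 0 w1 t0; rewrite /weight expr0 mulr1.
  apply: le_trans; apply: le_measure; rewrite ?inE //.
  by move=> x [lx /= rx]; split => //; rewrite cell0 /= rx e1.
rewrite (_ : _ `&` _ = set0) ?measure0 //.
by apply/seteqP; split => // x [_ /= rx]; apply: none; exists x.
Qed.

Lemma ae_cell_mass_ge : {ae P, forall w, exists2 c : R, 0 < c &
  forall j, ((c * weight j)%:E <= P (cell j w))%E}.
Proof.
pose N := \bigcap_k \bigcup_j light k.+1%:R^-1 j.
have mN : measurable N.
  apply: bigcapT_measurable => k; apply: bigcupT_measurable => j.
  exact: measurable_light.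
exists N; split => //; last first.
  move=> w /= notQ; apply: contrapT => notN; apply: notQ.
  have [k nk] : exists k, ~ (\bigcup_j light k.+1%:R^-1 j) w.
    by apply: contrapT => /forallNP allk; apply: notN => k _; exact: contrapT.
  exists k.+1%:R^-1 => [|j]; first by rewrite invr_gt0.
  by rewrite leNgt; apply/negP => lj; apply: nk; exists j.
have PN_le k : (P N <= (#|G|%:R / k.+1%:R)%:E)%E.
  apply: (@le_trans _ _ (P (\bigcup_j light k.+1%:R^-1 j))).
    apply: le_measure; rewrite ?inE //; last by move=> x; apply.
    by apply: bigcupT_measurable => j; exact: measurable_light.
  apply: le_trans (measure_light_le _ _) _; first by rewrite invr_ge0.
  by rewrite lee_fin -[X in (X <= _)]mulr_natl.
apply/eqP; rewrite eq_le measure_ge0 andbT; apply/lee_addgt0Pr => e e0.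
have kP := @archi_boundP R (#|G|%:R / e) (divr_ge0 (ler0n _ _) (ltW e0)).
apply: le_trans (PN_le (archi_bound (#|G|%:R / e))) _.
rewrite add0e lee_fin ler_pdivrMr // mulrC -ler_pdivrMr //.
by apply: ltW (lt_le_trans kP _); rewrite ler_nat.
Qed.

End refining_partition.

Arguments weight {R} F j.

Section binary_expansion.
Context {R : realType}.

Definition dyad (l : nat) : R := 2^-1 ^+ l.

Fixpoint dyadic_trunc (l : nat) (u : R) : R :=
  if l is l'.+1 then
    dyadic_trunc l' u + (if dyadic_trunc l' u + dyad l'.+1 <= u then dyad l'.+1 else 0)
  else 0.

Definition binary_digit (l : nat) (u : R) : bool := dyadic_trunc l u + dyad l.+1 <= u.

Lemma dyad_gt0 l : 0 < dyad l.
Proof. by rewrite exprn_gt0 // invr_gt0. Qed.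

Lemma dyadS l : dyad l = dyad l.+1 + dyad l.+1.
Proof. by rewrite /dyad exprS; field. Qed.

Lemma dyadic_trunc_bounds l (u : R) : 0 <= u < 1 ->
  dyadic_trunc l u <= u < dyadic_trunc l u + dyad l.
Proof.
move=> /andP[u0 u1]; elim: l => [|l /andP[lo hi]] /=.
  by rewrite /dyad expr0 add0r u0 u1.
case: ifP => [dig|/negbT]; rewrite ?addr0.
  by rewrite dig /=; move: hi; rewrite dyadS addrA.
by rewrite -ltNge lo.
Qed.

Lemma eq_dyadic_trunc l (u u' : R) :
  (forall i, (i < l)%N -> binary_digit i u = binary_digit i u') ->
  dyadic_trunc l u = dyadic_trunc l u'.
Proof.
elim: l => [//|l IH] eq_dig /=.
have := eq_dig l (ltnSn l); rewrite /binary_digit => ->.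
by rewrite IH // => i il; apply: eq_dig; exact: ltnW.
Qed.

Lemma binary_digits_close l (u u' : R) : 0 <= u < 1 -> 0 <= u' < 1 ->
  (forall i, (i < l)%N -> binary_digit i u = binary_digit i u') ->
  `|u - u'| < dyad l.
Proof.
move=> hu hu' eq_dig.
move: (dyadic_trunc_bounds l u hu) (dyadic_trunc_bounds l u' hu').
rewrite (eq_dyadic_trunc _ _ _ eq_dig) => /andP[lo hi] /andP[lo' hi'].
by rewrite ltr_norml; apply/andP; split; lra.
Qed.

Lemma measurable_dyadic_trunc {d} {T : measurableType d} l (f : T -> R) :
  measurable_fun setT f -> measurable_fun setT (fun w => dyadic_trunc l (f w)).
Proof.
move=> mf; elim: l => [|l IH] /=; first exact: measurable_cst.
apply: measurable_funD => //; apply: measurable_fun_if => //.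
by apply: measurable_fun_ler => //; exact: measurable_funD.
Qed.

Lemma measurable_binary_digit {d} {T : measurableType d} l (f : T -> R) :
  measurable_fun setT f -> measurable_fun setT (fun w => binary_digit l (f w)).
Proof.
move=> mf; apply: measurable_fun_ler => //.
by apply: measurable_funD => //; exact: measurable_dyadic_trunc.
Qed.

End binary_expansion.

Section vector_norms.
Context {R : realType}.

Lemma norm_inf_ge {n} (v : 'rV[R]_n) k : `|v ord0 k| <= norm_inf v.
Proof. exact: (le_bigmax _ (fun k => `|v ord0 k|)). Qed.

Lemma norm_inf_argmax {n} (v : 'rV[R]_n) i :
  (forall k, `|v ord0 k| <= `|v ord0 i|) -> norm_inf v = `|v ord0 i|.
Proof.
move=> imax; apply/eqP; rewrite eq_le norm_inf_ge andbT.
by apply: bigmax_le => // k _; exact: imax.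
Qed.

Lemma norm_inf_normalize {n} (v : 'rV[R]_n.+1) :
  norm_inf ((norm_inf v)^-1 *: v) = (norm_inf v != 0)%:R.
Proof.
have [i _ imax] := arg_maxP (fun k => `|v ord0 k|) (isT : xpredT ord0).
have vi : norm_inf v = `|v ord0 i| by apply: norm_inf_argmax => k; exact: imax.
have M0 : 0 <= (norm_inf v)^-1 by rewrite invr_ge0 vi.
have scaled k : `|((norm_inf v)^-1 *: v) ord0 k| = (norm_inf v)^-1 * `|v ord0 k|.
  by rewrite mxE normrM ger0_norm.
rewrite (@norm_inf_argmax _ _ i); last first.
  by move=> k; rewrite !scaled; apply: ler_wpM2l => //; exact: imax.
by rewrite scaled vi; case: eqP => [->|/eqP nz]; rewrite ?invr0 ?mul0r ?mulVf.
Qed.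

Lemma norm_2_lt {n} (v : 'rV[R]_n.+1) (a : R) :
  (forall k, `|v ord0 k| < a) -> norm_2 v < n.+1%:R * a.
Proof.
move=> va; have a0 : 0 < a := le_lt_trans (normr_ge0 _) (va ord0).
have na0 : 0 < n.+1%:R * a by rewrite mulr_gt0.
rewrite /norm_2 -(ger0_norm (ltW na0)) -sqrtr_sqr ltr_sqrt ?exprn_gt0 //.
apply: (@lt_le_trans _ _ (\sum_(k < n.+1) a ^+ 2)).
  apply: ltr_sum => [|k _]; first by apply/hasP; exists ord0; rewrite ?mem_index_enum.
  by rewrite -real_normK ?num_real // !expr2 ltr_pM.
rewrite sumr_const card_ord -[X in X <= _]mulr_natl exprMn ler_pM2r ?exprn_gt0 //.
by rewrite expr2 ler_peMr // ler1n.
Qed.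

Lemma eq_of_norm1_sign (x y : R) :
  `|x| = 1 -> `|y| = 1 -> (0 <= x) = (0 <= y) -> x = y.
Proof.
move=> nx ny; have [x0 y0|x0 y0] := leP 0 x.
  by rewrite -(ger0_norm x0) -(ger0_norm (esym y0 : 0 <= y)) nx ny.
have {}y0 : y < 0 by rewrite ltNge -y0.
by rewrite -(opprK x) -(opprK y) -(ltr0_norm x0) -(ltr0_norm y0) nx ny.
Qed.

End vector_norms.

Section measurable_norms.
Context {d : measure_display} {T : measurableType d} {R : realType}.

Lemma measurable_inv : measurable_fun setT (@GRing.inv R).
Proof.
have -> : [set: R] = [set x | x != 0] `|` [set 0].
  by apply/seteqP; split => x // _; have [->|nz] := eqVneq x 0; [right|left].
have mD : measurable [set x : R | x != 0] by apply: open_measurable; exact: open_neq.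
apply/(measurable_funU _ mD (measurable_set1 0)); split.
  apply: open_continuous_measurable_fun; first exact: open_neq.
  by move=> x; rewrite inE /= => nz; exact: inv_continuous.
exact: measurable_fun_set1.
Qed.

Lemma measurable_bigmax (I : Type) (s : seq I) (f : I -> T -> R) :
  (forall i, measurable_fun setT (f i)) ->
  measurable_fun setT (fun w => \big[Num.max/0]_(i <- s) f i w).
Proof.
move=> mf; elim: s => [|a s IH].
  by under eq_fun do rewrite big_nil; exact: measurable_cst.
by under eq_fun do rewrite big_cons; exact: measurable_maxr.
Qed.

Variables (n : nat) (Z : T -> 'rV[R]_n).
Hypothesis mZ : forall k, measurable_fun setT (fun w => Z w ord0 k).

Lemma measurable_norm_inf : measurable_fun setT (fun w => norm_inf (Z w)).
Proof. by apply: measurable_bigmax => k; exact: measurableT_comp. Qed.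

Lemma measurable_ball_norm_2 (z : 'rV[R]_n) (r : R) :
  measurable [set w | norm_2 (Z w - z) < r].
Proof.
have mnorm : measurable_fun setT (fun w => norm_2 (Z w - z)).
  apply: measurableT_comp; first exact: continuous_measurable_fun (@sqrt_continuous R).
  apply: measurable_sum => k; apply: measurable_funX.
  by under eq_fun do rewrite !mxE; exact: measurable_funB.
rewrite (_ : [set w | _] = (fun w => norm_2 (Z w - z) < r) @^-1` [set true]) //.
exact/measurable_fun_fibers/measurable_fun_ltr.
Qed.

End measurable_norms.

Lemma dyadic_scale {R : realType} (K eps : R) : 0 < eps < K ->
  exists j, K * dyad j < eps <= 2 * (K * dyad j).
Proof.
move=> /andP[e0 eK]; have K0 : 0 < K := lt_trans e0 eK.
have ex_small : exists j, K * dyad j < eps.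
  have := archi_boundP (divr_ge0 (ltW K0) (ltW e0)); set k := archi_bound _ => kP.
  exists k; rewrite /dyad exprVn -natrX ltr_pdivrMr ?ltr0n ?expn_gt0 //.
  rewrite ltr_pdivrMr // in kP; apply: lt_le_trans kP _.
  by rewrite mulrC ler_pM2l // ler_nat ltnW // ltn_expl.
case: (ex_minnP ex_small) => [[|j]] small jmin.
  by move: small; rewrite /dyad expr0 mulr1 => /(lt_trans eK); rewrite ltxx.
have : ~~ (K * dyad j < eps) by apply/negP => /jmin; rewrite ltnn.
by rewrite -leNgt dyadS mulrDr => le; exists j.+1; rewrite small /=; lra.
Qed.

Lemma mould_of_dyadic_balls {d : measure_display} {T : measurableType d}
    {R : realType} (P : probability T R) n m (Z : T -> 'rV[R]_n) z (K c : R) :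
  (forall k, measurable_fun setT (fun w => Z w ord0 k)) -> 0 < K -> 0 < c ->
  (forall j, ((c * dyad j ^+ m)%:E <= P [set w | (norm_2 (Z w - z) < K * dyad j)%R])%E) ->
  mould P m Z z.
Proof.
move=> mZ K0 c0 mass; rewrite /mould /= limf_einfE.
have K20 : 0 < 2 * K by rewrite mulr_gt0.
apply: (@lt_le_trans _ _ (c / (2 * K) ^+ m)%:E).
  by rewrite lte_fin divr_gt0 // exprn_gt0.
apply: le_ereal_sup_tmp.
pose V := [set x : R | 0 < x < K].
have V_near : (0 : R)^'+ V.
  by near=> x; apply/andP; split; near: x; [exact: nbhs_right_gt | exact: nbhs_right_lt].
eexists; first by exists V.
apply: le_ereal_inf_tmp => _ [eps epsV <-].
have [e0 _] := andP epsV.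
have [j /andP[small big]] := dyadic_scale _ _ epsV.
have ball_le : (P [set w | (norm_2 (Z w - z) < K * dyad j)%R] <=
                P [set w | (norm_2 (Z w - z) < eps)%R])%E.
  apply: le_measure; rewrite ?inE; try exact: measurable_ball_norm_2.
  by move=> w /= /lt_trans; apply.
apply: le_trans (lee_wpmul2r _ (le_trans (mass j) ball_le)); last first.
  by rewrite lee_fin invr_ge0 exprn_ge0 // ltW.
rewrite -EFinM lee_fin -mulrA ler_pM2l // -expr_div_n -exprVn.
apply: lerXn2r;
  rewrite ?nnegrE ?invr_ge0 ?divr_ge0 ?(ltW K20) ?(ltW e0) ?(ltW (dyad_gt0 j)) //.
by rewrite ler_pdivlMr // ler_pdivrMl // -mulrA.
Unshelve. all: by end_near.
Qed.

Section sup_sphere.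
Context {d : measure_display} {T : measurableType d} {R : realType}.
Variables (P : probability T R) (m : nat) (Y : T -> 'rV[R]_m.+1).
Hypothesis mY : forall p, measurable_fun setT (fun w => Y w ord0 p).
Hypothesis Y_sphere : forall w, norm_inf (Y w) = 0 \/ norm_inf (Y w) = 1.

Local Notation y w p := (Y w ord0 p).
Local Notation pattern := {ffun 'I_m.+1 * 'I_m.+1 -> bool}.

Definition modulus_pattern w : pattern := [ffun pq => `|y w pq.1| <= `|y w pq.2|].

Definition top_of (c : pattern) : 'I_m.+1 := odflt ord0 [pick i | [forall j, c (j, i)]].

Definition top w := top_of (modulus_pattern w).

(* A cell of level [j] fixes the index of a coordinate of maximal modulus,
   that coordinate itself (it is 0 or +-1), and the first [j] binary digits of
   each of the [m] other coordinates, rescaled from [-1, 1] into [0, 1). *)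
Definition shape w := (modulus_pattern w, [ffun p => 0 <= y w p], [ffun p => y w p == 0]).

Definition rescale (x : R) := (x + 1) / 3.

Definition digits_off (c : pattern) (b : {ffun 'I_m.+1 -> bool}) : {ffun 'I_m -> bool} :=
  [ffun i => b (lift (top_of c) i)].

Definition coord_digits l w :=
  digits_off (modulus_pattern w) [ffun p => binary_digit l (rescale (y w p))].

Lemma top_max w p : `|y w p| <= `|y w (top w)|.
Proof.
rewrite /top /top_of; case: pickP => [i /forallP imax | none] /=.
  by have := imax p; rewrite ffunE.
have [i _ imax] := arg_maxP (fun k => `|y w k|) (isT : xpredT ord0).
by have /negP[] := none i; apply/forallP => k; rewrite ffunE; exact: imax.
Qed.

Lemma norm_inf_top w : norm_inf (Y w) = `|y w (top w)|.
Proof. exact/norm_inf_argmax/top_max. Qed.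

Lemma top_coord_norm1 w : y w (top w) != 0 -> `|y w (top w)| = 1.
Proof.
rewrite -normr_eq0 -norm_inf_top.
by case: (Y_sphere w) => ->; rewrite ?eqxx.
Qed.

Lemma rescale_coord_range w p : 0 <= rescale (y w p) < 1.
Proof.
have : `|y w p| <= 1.
  by apply: le_trans (top_max w p) _; rewrite -norm_inf_top; case: (Y_sphere w) => ->.
by rewrite ler_norml /rescale => /andP[lo hi]; apply/andP; split; lra.
Qed.

Lemma measurable_fibers_modulus_pattern : measurable_fibers modulus_pattern.
Proof.
apply: (measurable_fibers_ffun (fun pq w => `|y w pq.1| <= `|y w pq.2|)) => pq.
by apply/measurable_fun_fibers/measurable_fun_ler; exact: measurableT_comp.
Qed.

Lemma measurable_fibers_shape : measurable_fibers shape.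
Proof.
apply: measurable_fibers_pair; first apply: measurable_fibers_pair.
- exact: measurable_fibers_modulus_pattern.
- apply: (measurable_fibers_ffun (fun p w => 0 <= y w p)) => p.
  exact/measurable_fun_fibers/measurable_fun_ler.
- apply: (measurable_fibers_ffun (fun p w => y w p == 0)) => p.
  exact/measurable_fun_fibers/measurable_fun_eqr.
Qed.

Lemma measurable_fibers_coord_digits l : measurable_fibers (coord_digits l).
Proof.
have mpair : measurable_fibers (fun w =>
    (modulus_pattern w, [ffun p => binary_digit l (rescale (y w p))])).
  apply: measurable_fibers_pair; first exact: measurable_fibers_modulus_pattern.
  apply: (measurable_fibers_ffun (fun p w => binary_digit l (rescale (y w p)))) => p.
  apply/measurable_fun_fibers/measurable_binary_digit.
  by apply: measurable_funM => //; exact: measurable_funD.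
exact: (measurable_fibers_comp (fun cb => digits_off cb.1 cb.2) mpair).
Qed.

Local Notation cell := (cell shape coord_digits).

Lemma cell_coord_close j w w' : cell j w w' -> forall p, `|y w' p - y w p| < 3 * dyad j.
Proof.
move=> [eq_shape eq_digits] p.
have eq_mod : modulus_pattern w' = modulus_pattern w := congr1 (fun s => s.1.1) eq_shape.
have /ffunP eq_sign := congr1 (fun s => s.1.2) eq_shape.
have /ffunP eq_zero := congr1 snd eq_shape.
have eq_top : top w' = top w by rewrite /top eq_mod.
have d3 : 0 < 3 * dyad j :> R by rewrite mulr_gt0 ?dyad_gt0.
case: (unliftP (top w) p) => [i ->|->].
  set q := lift (top w) i.
  have same_digits l : (l < j)%N ->
      binary_digit l (rescale (y w' q)) = binary_digit l (rescale (y w q)).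
    by move=> lj; have /ffunP/(_ i) := eq_digits l lj; rewrite !ffunE eq_mod.
  have := binary_digits_close _ _ _
    (rescale_coord_range w' q) (rescale_coord_range w q) same_digits.
  have -> : y w' q - y w q = 3 * (rescale (y w' q) - rescale (y w q)).
    by rewrite /rescale; field.
  by rewrite normrM ger0_norm // ltr_pM2l.
suff -> : y w' (top w) = y w (top w) by rewrite subrr normr0.
have := eq_zero (top w); rewrite !ffunE => eq_zero_top.
have [z|nz] := eqVneq (y w (top w)) 0.
  by rewrite z; apply/eqP; rewrite eq_zero_top z.
apply: eq_of_norm1_sign; last by have := eq_sign (top w); rewrite !ffunE.
  by rewrite -eq_top top_coord_norm1 // eq_top eq_zero_top.
exact: top_coord_norm1.
Qed.

Lemma cell_sub_ball j w :
  cell j w `<=` [set w' | norm_2 (Y w' - Y w) < m.+1%:R * 3 * dyad j].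
Proof.
move=> w' /cell_coord_close close; rewrite /= -mulrA.
by apply: norm_2_lt => k; rewrite !mxE; exact: close.
Qed.

Lemma weight_coord_digits j : weight {ffun 'I_m -> bool} j = dyad j ^+ m :> R.
Proof.
by rewrite /weight /dyad card_ffun card_bool card_ord natrX -exprVn -!exprM mulnC.
Qed.

Theorem sup_sphere_ae_mould : {ae P, forall w, mould P m Y (Y w)}.
Proof.
have := ae_cell_mass_ge P _ _ measurable_fibers_shape measurable_fibers_coord_digits.
apply: filterS => w [c c0 mass].
apply: (@mould_of_dyadic_balls _ _ _ _ _ _ _ _ (m.+1%:R * 3) c) => //.
move=> j; have := mass j; rewrite weight_coord_digits => /le_trans; apply.
apply: le_measure; rewrite ?inE; last exact: cell_sub_ball.
  exact: measurable_cell _ _ measurable_fibers_shape measurable_fibers_coord_digits j w.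
exact: measurable_ball_norm_2.
Qed.

End sup_sphere.

Lemma measurable_coord_random_vector {d : measure_display} {T : measurableType d}
    {R : realType} {n} (X : T -> 'rV[R]_n) :
  random_vector X -> forall k, measurable_fun setT (fun w => X w ord0 k).
Proof.
move=> mX k _ B mB; rewrite setTI; apply: (mX ((fun v => v ord0 k) @^-1` B)).
apply: sub_gen_smallest.
by exists k => //; exists B.
Qed.

Lemma measurable_gcross {d : measure_display} {T : measurableType d}
    {R : realType} {m} (M : T -> 'M[R]_(m, m.+1)) :
  (forall i j, measurable_fun setT (fun w => M w i j)) ->
  forall k, measurable_fun setT (fun w => gcross (M w) ord0 k).
Proof.
move=> mM k; under eq_fun do rewrite mxE /determinant.
apply: measurable_sum => s; apply: measurable_funM => //.
apply: measurable_prod => i _; under eq_fun do rewrite mxE.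
by case: (unlift ord0 i) => [i'|]; [exact: mM | exact: measurable_cst].
Qed.

Theorem mainTheorem8 (R : realType) (d : measure_display)
  (T : measurableType d) (P : probability T R) (m : nat) (hm : (1 <= m)%N)
  (X : 'I_m.+1 -> T -> 'rV[R]_m.+1)
  (Xrv : forall i, random_vector (X i))
  (Xind : independent_rv P X)
  (Xid : identically_distributed P X)
  (Xli : {ae P, forall w,
     row_free (\matrix_(i < m) X (widen_ord (leqnSn m) i) w)}) :
  let W := fun w => gcross (\matrix_(i < m) X (widen_ord (leqnSn m) i) w) in
  let Y := fun w => (norm_inf (W w))^-1 *: W w in
  {ae P, forall w, mould P m Y (Y w)}.
Proof.
move=> W Y.
have mW : forall k, measurable_fun setT (fun w => W w ord0 k).
  apply: measurable_gcross => i j; under eq_fun do rewrite mxE.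
  exact: measurable_coord_random_vector.
apply: sup_sphere_ae_mould => [k|w].
  under eq_fun do rewrite mxE.
  apply: measurable_funM => //; apply: measurableT_comp measurable_inv _.
  exact: measurable_norm_inf.
by rewrite /Y norm_inf_normalize; case: (_ != 0); [right|left].
Qed.
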